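(* Let $m,n\geq1$ and let $\lambda,\mu\in\Lambda_m^n$ be two distinct weights with $|\lambda|\leq|\mu|$. Then: (1) there is no path of length $2$ in $\Gamma_m^n$ between $e_\lambda$ and $e_\mu$ passing through a vertex $e_\nu$ with $|\nu|=|\lambda|$ or $|\nu|=|\mu|$; (2) the set of length-$2$ paths between $e_\lambda$ and $e_\mu$ passing through vertices $e_\nu$ with $|\nu|<|\lambda|$ contains at most one element; (3) the set of length-$2$ paths between $e_\lambda$ and $e_\mu$ passing through vertices $e_\nu$ with $|\nu|>|\mu|$ contains at most one element.
   Context: A weight of type $(m,n)$ is a word $\lambda=\lambda_1\cdots\lambda_{m+n}$ in $\vee$ (''down'') and $\wedge$ (''up'') with $m$ letters $\vee$ and $n$ letters $\wedge$; $\Lambda_m^n$ is the set of weights. The height of $\lambda$ is $|\lambda|=\sum_{i:\lambda_i=\vee}\#\{j<i:\lambda_j=\wedge\}$. For $\lambda\in\Lambda_m^n$ the cups of $\underline\lambda$ are obtained by repeatedly pairing a $\vee$ with a $\wedge$ that are neighbours ($\vee$ on the left), ignoring positions already paired (drawn as nested non-crossing lower semicircles on a horizontal line); mirroring each cup above the line gives the closed circles of the degree-zero arc diagram $e_\lambda$. $\Gamma_m^n$ is the simple undirected graph with vertex set $\{e_\lambda\}_{\lambda\in\Lambda_m^n}$ and an edge between $e_\lambda$ and $e_\mu$ if one of $\lambda,\mu$ is obtained from the other by exchanging the labels at the two endpoints of one cup (i.e. of a $\vee\cdots\wedge$ pair on a single circle of $e_\lambda$, resp. $e_\mu$). A path of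 length $2$ between $e_\lambda$ and $e_\mu$ through $e_\nu$ means $e_\nu$ is adjacent to both. *)

From mathcomp Require Import all_boot.
Set Implicit Arguments. Unset Strict Implicit. Unset Printing Implicit Defensive.

(* Weights are words in {down, up}: [true] = \vee (down), [false] = \wedge (up).
   Positions are numbered 0, 1, ..., m+n-1. *)
Definition is_weight (m n : nat) (l : seq bool) : bool :=
  (size l == m + n) && (count id l == m).

Definition height (l : seq bool) : nat :=
  \sum_(i < size l | nth false l i) count negb (take i l).

(* Cups of l: pairs (i, j), i < j, l_i = \vee, l_j = \wedge, obtained by
   repeatedly pairing a \vee with the neighbouring \wedge to its right,
   ignoring already paired positions. *)
Fixpoint cups_aux (s : seq bool) (i : nat) (stack : seq nat) : seq (nat * nat) :=
  match s with
  | [::] => [::]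
  | b :: s' =>
      if b then cups_aux s' i.+1 (i :: stack)
      else match stack with
           | [::] => cups_aux s' i.+1 [::]
           | j :: st => (j, i) :: cups_aux s' i.+1 st
           end
  end.

Definition cups (l : seq bool) : seq (nat * nat) := cups_aux l 0 [::].

Definition swap_labels (l : seq bool) (i j : nat) : seq bool :=
  set_nth false (set_nth false l i (nth false l j)) j (nth false l i).

Definition cup_flip (l mu : seq bool) : bool :=
  has (fun c => mu == swap_labels l c.1 c.2) (cups l).

Definition adj (l mu : seq bool) : bool := cup_flip l mu || cup_flip mu l.

From mathcomp Require Import all_boot zify.
Set Implicit Arguments. Unset Strict Implicit. Unset Printing Implicit Defensive.

(* Since |l| + C(m, 2) is the sum of the positions of the downs of l, flipping a
   cup (i, j) raises the height by j - i.  Hence adjacent weights have different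
   heights, which is (1), and every edge of a path in (2) or (3) is a cup flip
   in a known direction.  Both (2) and (3) then follow from the absence of
   "squares" x -> p, x -> q, y -> p, y -> q of cup flips with p <> q and x <> y:
   in (2) the two middle vertices play x and y, in (3) they play p and q.  In
   such a square the two cups of x are distinct, hence have four distinct
   endpoints, and p, q differ exactly there: the positions turned down from p
   to q are the left end of the first cup and the right end of the second, the
   other two are turned up.  Cups do not cross, and the only noncrossing way to match these
   positions compatibly is the given one, so y uses the same cups as x and
   x = y. *)

Lemma gtn_trans : transitive gtn.
Proof. by move=> y x z /= lt_yx lt_zy; exact: ltn_trans lt_zy lt_yx. Qed.

Lemma path_gtn_pop i j st : j < i -> path gtn j st -> path gtn i.+1 st.
Proof. by move=> lt_j_i; apply: path_le gtn_trans _ _ _ _; apply: ltnW. Qed.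

Section CupsAux.

Variable w : seq bool.

Lemma cups_aux_fst s i st x y :
  (x, y) \in cups_aux s i st -> (x \in st) || (i <= x).
Proof.
elim: s i st => [|[] s IH] i st //=.
- by move/IH; rewrite inE -orbA => /or3P [/eqP ->|->|/ltnW ->]; rewrite ?leqnn ?orbT.
- case: st => [|j st]; first by move/IH => /ltnW.
  rewrite !inE => /orP [/eqP [-> _]|/IH /orP [->|/ltnW ->]]; by rewrite ?eqxx ?orbT.
Qed.

Lemma cups_aux_snd s i st x y : (x, y) \in cups_aux s i st -> i <= y.
Proof.
elim: s i st => [|[] s IH] i st //=; first by move/IH/ltnW.
case: st => [|j st]; first by move/IH/ltnW.
by rewrite inE => /orP [/eqP [_ ->]|/IH/ltnW].
Qed.

Lemma cups_aux_endpoints s i st x y :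
  s = drop i w -> all (nth false w) st -> path gtn i st ->
  (x, y) \in cups_aux s i st ->
  [/\ x < y, y < size w, nth false w x & ~~ nth false w y].
Proof.
elim: s i st => [|b s IH] i st //= def_s down_st dec_st.
have lt_i_w : i < size w by case: ltnP def_s => // /drop_oversize ->.
move: def_s; rewrite (drop_nth false lt_i_w) => -[w_i def_s].
case: b w_i => w_i /=.
  by apply: IH => //=; [rewrite -w_i down_st | rewrite ltnSn dec_st].
case: st down_st dec_st => [|j st] /=; first by move=> _ _; apply: IH.
move=> /andP [w_j down_st] /andP [lt_j_i dec_st].
rewrite inE => /orP [/eqP [-> ->]|]; first by rewrite -w_i.
by apply: IH => //; apply: path_gtn_pop lt_j_i dec_st.
Qed.

Lemma cups_aux_snd_inj s i st x x' y :
  (x, y) \in cups_aux s i st -> (x', y) \in cups_aux s i st -> x = x'.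
Proof.
elim: s i st => [|[] s IH] i st //=; first exact: IH.
case: st => [|j st]; first exact: IH.
rewrite !inE => /orP [/eqP [-> ->]|in_xy].
  by case/orP => [/eqP [->] //|/cups_aux_snd]; rewrite ltnn.
case/orP => [/eqP [-> def_y]|]; last exact: IH.
by have := cups_aux_snd in_xy; rewrite def_y ltnn.
Qed.

Lemma cups_aux_fst_outside s i j st x y :
  path gtn j st -> (x, y) \in cups_aux s i.+1 st -> (x < j) || (i < x).
Proof.
move=> dec_st /cups_aux_fst /orP [x_st|->]; last exact: orbT.
by have /= -> := allP (order_path_min gtn_trans dec_st) x x_st.
Qed.

Lemma cups_aux_fst_inj s i st x y y' :
  path gtn i st ->
  (x, y) \in cups_aux s i st -> (x, y') \in cups_aux s i st -> y = y'.
Proof.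
elim: s i st => [|[] s IH] i st //= dec_st.
  by apply: IH; rewrite /= ltnSn.
case: st dec_st => [|j st] /=; first by move=> _; apply: IH.
move=> /andP [lt_j_i dec_st].
have fresh_j z : (j, z) \in cups_aux s i.+1 st -> False.
  by move/(cups_aux_fst_outside dec_st); lia.
rewrite !inE => /orP [/eqP [-> ->]|in_xy].
  by case/orP => [/eqP [->] //|/fresh_j].
case/orP => [/eqP [def_x _]|]; first by rewrite def_x in in_xy; case: (fresh_j _ in_xy).
by apply: IH in_xy; exact: path_gtn_pop lt_j_i dec_st.
Qed.

Lemma cups_aux_noncrossing s i st a b c d :
  path gtn i st -> (a, b) \in cups_aux s i st -> (c, d) \in cups_aux s i st ->
  a < c < b -> d < b.
Proof.
elim: s i st => [|[] s IH] i st //= dec_st.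
  by apply: IH; rewrite /= ltnSn.
case: st dec_st => [|j st] /=; first by move=> _; apply: IH.
move=> /andP [lt_j_i dec_st].
rewrite !inE => /orP [/eqP [-> ->]|in_ab] /orP [/eqP [-> ->]|in_cd].
- lia.
- by have := cups_aux_fst_outside dec_st in_cd; lia.
- by have := cups_aux_snd in_ab; lia.
- by apply: IH in_ab in_cd; exact: path_gtn_pop lt_j_i dec_st.
Qed.

End CupsAux.

Lemma cup_endpoints l a b :
  (a, b) \in cups l -> [/\ a < b, b < size l, nth false l a & ~~ nth false l b].
Proof. by apply: cups_aux_endpoints; rewrite ?drop0. Qed.

Lemma cups_fst_inj l a b b' : (a, b) \in cups l -> (a, b') \in cups l -> b = b'.
Proof. exact: cups_aux_fst_inj. Qed.

Lemma cups_snd_inj l a a' b : (a, b) \in cups l -> (a', b) \in cups l -> a = a'.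
Proof. exact: cups_aux_snd_inj. Qed.

Lemma cups_noncrossing l a b c d :
  (a, b) \in cups l -> (c, d) \in cups l -> a < c < b -> d < b.
Proof. exact: cups_aux_noncrossing. Qed.

Lemma nth_swap_labels l i j p :
  nth false (swap_labels l i j) p =
  if p == j then nth false l i else if p == i then nth false l j else nth false l p.
Proof. by rewrite /swap_labels nth_set_nth /= nth_set_nth. Qed.

Lemma size_swap_labels l i j :
  i < size l -> j < size l -> size (swap_labels l i j) = size l.
Proof. by rewrite /swap_labels !size_set_nth; lia. Qed.

Lemma swap_labelsK l i j :
  i < size l -> j < size l -> swap_labels (swap_labels l i j) i j = l.
Proof.
move=> lt_i lt_j; apply: (@eq_from_nth _ false); first by rewrite !size_swap_labels.
move=> p _; rewrite !nth_swap_labels.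
by repeat case: ifP => /eqP ?; subst.
Qed.

Definition down_weight (c : nat -> nat) (l : seq bool) : nat :=
  \sum_(k < size l) nth false l k * c k.

Lemma down_weight_cons c x s :
  down_weight c (x :: s) = x * c 0 + down_weight (c \o succn) s.
Proof. by rewrite /down_weight big_ord_recl. Qed.

Lemma count_down_weight l : count id l = down_weight (fun=> 1) l.
Proof.
elim: l => [|x s IH]; first by rewrite /down_weight big_ord0.
by rewrite down_weight_cons /= IH muln1.
Qed.

Lemma down_weight_swap c l i j :
  i < j -> j < size l -> nth false l i -> ~~ nth false l j ->
  down_weight c (swap_labels l i j) + c i = down_weight c l + c j.
Proof.
move=> lt_ij lt_j l_i /negbTE l_j.
have lt_i : i < size l by exact: ltn_trans lt_j.
have ne_ij : Ordinal lt_i != Ordinal lt_j by rewrite -val_eqE /= ltn_eqF.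
rewrite /down_weight size_swap_labels //.
rewrite [in LHS](bigD1 (Ordinal lt_j)) // [in LHS](bigD1 (Ordinal lt_i)) //=.
rewrite [in RHS](bigD1 (Ordinal lt_j)) // [in RHS](bigD1 (Ordinal lt_i)) //=.
rewrite !nth_swap_labels eqxx ltn_eqF // eqxx l_i l_j.
rewrite (eq_bigr (fun k : 'I_(size l) => nth false l k * c k)); first lia.
move=> k /andP [ne_ki ne_kj]; rewrite nth_swap_labels.
by move: ne_ki ne_kj; rewrite -!val_eqE /= => /negbTE -> /negbTE ->.
Qed.

Lemma height_cons x s : height (x :: s) = height s + ~~ x * count id s.
Proof.
rewrite /height /= big_mkcond big_ord_recl /= if_same add0n.
rewrite count_down_weight /down_weight big_distrr [in RHS]big_mkcond -big_split.
by apply: eq_bigr => i _; case: (nth false s i); rewrite /= ?muln1 ?muln0 // addnC.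
Qed.

Lemma height_add_binom l : height l + 'C(count id l, 2) = down_weight id l.
Proof.
elim: l => [|x s IH]; first by rewrite /height /down_weight !big_ord0.
have -> : down_weight id (x :: s) = down_weight id s + count id s.
  rewrite down_weight_cons muln0 count_down_weight /down_weight -big_split /=.
  by apply: eq_bigr => k _; rewrite mulnS muln1 addnC.
by rewrite height_cons -IH; case: x; rewrite /= ?binS ?bin1 ?add0n; lia.
Qed.

Lemma height_swap_labels l i j :
  i < j -> j < size l -> nth false l i -> ~~ nth false l j ->
  height (swap_labels l i j) = height l + (j - i).
Proof.
move=> lt_ij lt_j l_i l_j.
have count_swap : count id (swap_labels l i j) = count id l.
  by have := down_weight_swap (fun=> 1) lt_ij lt_j l_i l_j; rewrite !count_down_weight; lia.
have := down_weight_swap id lt_ij lt_j l_i l_j.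
by rewrite -!height_add_binom count_swap /=; lia.
Qed.

Lemma cup_flip_height l mu : cup_flip l mu -> height l < height mu.
Proof.
case/hasP => -[a b] /cup_endpoints [lt_ab lt_b l_a l_b] /eqP ->.
by rewrite height_swap_labels //= -addn1 leq_add2l subn_gt0.
Qed.

Definition turned_down (l mu : seq bool) : pred nat :=
  fun p => ~~ nth false l p && nth false mu p.

Lemma turned_down_cup_flips x a b c d :
  (a, b) \in cups x -> (c, d) \in cups x -> (a, b) != (c, d) ->
  turned_down (swap_labels x a b) (swap_labels x c d) =1 pred2 a d.
Proof.
move=> ab_x cd_x ne_ab_cd.
have [lt_ab _ x_a /negbTE x_b] := cup_endpoints ab_x.
have [lt_cd _ x_c /negbTE x_d] := cup_endpoints cd_x.
have ne_ac : a != c.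
  by apply: contraNneq ne_ab_cd => eq_ac; rewrite eq_ac in ab_x *; rewrite (cups_fst_inj ab_x cd_x).
have ne_bd : b != d.
  by apply: contraNneq ne_ab_cd => eq_bd; rewrite eq_bd in ab_x *; rewrite (cups_snd_inj ab_x cd_x).
have ne_ad : a != d by apply: contraTneq x_a => ->; rewrite x_d.
have ne_bc : b != c by apply: contraTneq x_c => <-; rewrite x_b.
move=> p; rewrite /turned_down /= !nth_swap_labels.
have [->|ne_pa] := eqVneq p a.
  by rewrite (ltn_eqF lt_ab) (negbTE ne_ad) (negbTE ne_ac) x_a x_b.
have [->|ne_pd] := eqVneq p d.
  by rewrite (eq_sym d b) (negbTE ne_bd) x_c x_d.
have [->|_] := eqVneq p b; first by rewrite x_a.
have [->|_] := eqVneq p c; first by rewrite x_d andbF.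
by rewrite andNb.
Qed.

Lemma noncrossing_matchings_eq a b c d a' b' c' d' :
  a < b -> c < d -> a' < b' -> c' < d' ->
  (a < c < b -> d < b) -> (c < a < d -> b < d) ->
  (a' < c' < b' -> d' < b') -> (c' < a' < d' -> b' < d') ->
  pred2 a d =1 pred2 a' d' -> pred2 c b =1 pred2 c' b' -> a = a' /\ b = b'.
Proof.
move=> lt_ab lt_cd lt_ab' lt_cd' nc1 nc2 nc1' nc2' ad_eq cb_eq.
move: (ad_eq a) (ad_eq d) (cb_eq c) (cb_eq b) (ad_eq a') (ad_eq d') (cb_eq c') (cb_eq b').
rewrite /= !eqxx ?orbT /=.
move=> /esym/pred2P + /esym/pred2P + /esym/pred2P + /esym/pred2P + /pred2P + /pred2P + /pred2P + /pred2P.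
by do 8 (case=> ?; subst); lia.
Qed.

Lemma cup_flip_square x y p q :
  p != q -> cup_flip x p -> cup_flip x q -> cup_flip y p -> cup_flip y q -> x = y.
Proof.
move=> ne_pq /hasP [[a b] ab_x /eqP def_p] /hasP [[c d] cd_x /eqP def_q].
move=> /hasP [[a' b'] ab_y /eqP def_p'] /hasP [[c' d'] cd_y /eqP def_q'].
have ne_x : (a, b) != (c, d).
  by apply: contraNneq ne_pq => -[eq_ac eq_bd]; rewrite def_p def_q eq_ac eq_bd.
have ne_y : (a', b') != (c', d').
  by apply: contraNneq ne_pq => -[eq_ac eq_bd]; rewrite def_p' def_q' eq_ac eq_bd.
have turned_pq : pred2 a d =1 pred2 a' d'.
  move=> k; rewrite -(turned_down_cup_flips ab_x cd_x ne_x) -def_p -def_q.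
  by rewrite -(turned_down_cup_flips ab_y cd_y ne_y) -def_p' -def_q'.
rewrite eq_sym in ne_x; rewrite eq_sym in ne_y.
have turned_qp : pred2 c b =1 pred2 c' b'.
  move=> k; rewrite -(turned_down_cup_flips cd_x ab_x ne_x) -def_p -def_q.
  by rewrite -(turned_down_cup_flips cd_y ab_y ne_y) -def_p' -def_q'.
have [lt_ab lt_bx _ _] := cup_endpoints ab_x.
have [lt_cd _ _ _] := cup_endpoints cd_x.
have [lt_ab' lt_by _ _] := cup_endpoints ab_y.
have [lt_cd' _ _ _] := cup_endpoints cd_y.
have [eq_a eq_b] : a = a' /\ b = b'.
  apply: noncrossing_matchings_eq turned_pq turned_qp => //;
    [ exact: cups_noncrossing ab_x cd_x | exact: cups_noncrossing cd_x ab_x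
    | exact: cups_noncrossing ab_y cd_y | exact: cups_noncrossing cd_y ab_y ].
rewrite -(swap_labelsK (ltn_trans lt_ab lt_bx) lt_bx) -def_p eq_a eq_b def_p'.
by rewrite swap_labelsK // (ltn_trans lt_ab' lt_by).
Qed.

Lemma adj_height_neq l mu : adj l mu -> height l != height mu.
Proof. by case/orP => /cup_flip_height; rewrite neq_ltn => ->; rewrite ?orbT. Qed.

Lemma adj_cup_flip l mu : adj l mu -> height l < height mu -> cup_flip l mu.
Proof.
case/orP => // /cup_flip_height lt_mu_l lt_l_mu.
by have := ltn_trans lt_mu_l lt_l_mu; rewrite ltnn.
Qed.

Theorem lemma2p7 (m n : nat) (l mu : seq bool) :
  1 <= m -> 1 <= n -> is_weight m n l -> is_weight m n mu -> l != mu ->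
  height l <= height mu ->
  (forall nu, is_weight m n nu -> adj l nu -> adj nu mu ->
     height nu <> height l /\ height nu <> height mu) /\
  (forall nu1 nu2, is_weight m n nu1 -> is_weight m n nu2 ->
     adj l nu1 -> adj nu1 mu -> height nu1 < height l ->
     adj l nu2 -> adj nu2 mu -> height nu2 < height l -> nu1 = nu2) /\
  (forall nu1 nu2, is_weight m n nu1 -> is_weight m n nu2 ->
     adj l nu1 -> adj nu1 mu -> height mu < height nu1 ->
     adj l nu2 -> adj nu2 mu -> height mu < height nu2 -> nu1 = nu2).
Proof.
move=> _ _ _ _ ne_l_mu le_l_mu.
have flip_down x y : adj x y -> height y < height x -> cup_flip y x.
  by rewrite /adj orbC; apply: adj_cup_flip.
split; [|split].
- move=> nu _ l_nu nu_mu; split; apply/eqP.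
    by rewrite eq_sym adj_height_neq.
  exact: adj_height_neq.
- move=> nu1 nu2 _ _ l_nu1 nu1_mu lt1 l_nu2 nu2_mu lt2.
  apply: (cup_flip_square ne_l_mu (flip_down _ _ l_nu1 lt1) _ (flip_down _ _ l_nu2 lt2)).
    exact: adj_cup_flip nu1_mu (leq_trans lt1 le_l_mu).
  exact: adj_cup_flip nu2_mu (leq_trans lt2 le_l_mu).
- move=> nu1 nu2 _ _ l_nu1 nu1_mu lt1 l_nu2 nu2_mu lt2.
  apply/eqP; apply: contraNT ne_l_mu => ne_nu; apply/eqP.
  apply: (cup_flip_square ne_nu _ _ (flip_down _ _ nu1_mu lt1) (flip_down _ _ nu2_mu lt2)).
    exact: adj_cup_flip l_nu1 (leq_ltn_trans le_l_mu lt1).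
  exact: adj_cup_flip l_nu2 (leq_ltn_trans le_l_mu lt2).
Qed.
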